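(* Let $\ell\le L_1$ be positive integers and $L\ge2$, and let $\mathcal M$ be a $(p,n,L_1)$-multi-labelling of an $L$-graph with $r(\mathcal M)\le L/2$. For $j\in[p]$ let $N^c_j$ be the number of $p$-vertices whose tuple contains $j$. Then $$\sum_{j:\,N^c_j\ge3}N^c_j\le\big(6\Delta(\mathcal M)-6\big)\ell.$$
   Context: An $L$-graph is a cycle with $2L$ vertices alternating between $n$-vertices and $p$-vertices. A $(p,n,L_1)$-multi-labelling assigns an $n$-label in $[n]$ to each $n$-vertex and a tuple of $d_r$ distinct $p$-labels in $[p]$ ($\ell\le d_r\le L_1$) to the $r$-th $p$-vertex, such that the $n$-label of each $n$-vertex differs from those of the $n$-vertices immediately preceding and following it in the cycle, and for each $n$-label $i$ and $p$-label $j$ the number of edges with $n$-endpoint labelled $i$ and $p$-endpoint's tuple containing $j$ is $0$ or $\ge2$. $r(\mathcal M)$ and $c(\mathcal M)$ are the numbers of distinct $n$- and $p$-labels, and $\Delta(\mathcal M)=1+\frac L2+\sum_{r=1}^L\frac{d_r}{2\ell}-r(\mathcal M)-\frac{c(\mathcal M)}{\ell}$. *)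

From mathcomp Require Import all_boot all_order all_algebra.
Set Implicit Arguments. Unset Strict Implicit. Unset Printing Implicit Defensive.
Import Order.TTheory GRing.Theory Num.Theory.

(* An L-graph: cycle v_0, u_0, v_1, u_1, ..., v_{L-1}, u_{L-1}, (back to v_0),
   n-vertices v_r and p-vertices u_r indexed by r : 'I_L.
   Edges: (v_r, u_r) and (u_r, v_{r+1 mod L}), 2L edges in total.
   A multi-labelling is given by
     a : 'I_L -> 'I_n          (n-label of v_r; labels [n] = {0..n-1})
     T : 'I_L -> seq 'I_p      (tuple of p-labels of u_r; [p] = {0..p-1}). *)

Definition edge_count (n p L : nat) (a : 'I_L -> 'I_n) (T : 'I_L -> seq 'I_p)
  (i : 'I_n) (j : 'I_p) : nat :=
  #|[set r : 'I_L | (a r == i) && (j \in T r)]|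
  + #|[set r : 'I_L | (a (ordS r) == i) && (j \in T r)]|.

Definition is_multi_labelling (p n L1 ell L : nat)
  (a : 'I_L -> 'I_n) (T : 'I_L -> seq 'I_p) : Prop :=
  (forall r : 'I_L, uniq (T r) /\ ell <= size (T r) <= L1) /\
  (forall r : 'I_L, a r != a (ordS r)) /\
  (forall (i : 'I_n) (j : 'I_p),
      edge_count a T i j = 0 \/ 2 <= edge_count a T i j).

Definition rM (n L : nat) (a : 'I_L -> 'I_n) : nat := #|[set a r | r : 'I_L]|.

Definition cM (p L : nat) (T : 'I_L -> seq 'I_p) : nat :=
  #|[set j : 'I_p | [exists r : 'I_L, j \in T r]]|.

Definition Nc (p L : nat) (T : 'I_L -> seq 'I_p) (j : 'I_p) : nat :=
  #|[set r : 'I_L | j \in T r]|.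

Local Open Scope ring_scope.

Definition DeltaM (p n ell L : nat) (a : 'I_L -> 'I_n) (T : 'I_L -> seq 'I_p) : rat :=
  1 + (L%:R / 2) + \sum_(r : 'I_L) ((size (T r))%:R / (2 * ell%:R))
  - (rM a)%:R - (cM T)%:R / ell%:R.

From mathcomp Require Import all_boot all_order all_algebra.
From mathcomp Require Import ring lra zify.
Import Order.TTheory GRing.Theory Num.Theory.

Set Implicit Arguments.
Unset Strict Implicit.
Unset Printing Implicit Defensive.

(* Double counting gives sum_r d_r = sum_j N^c_j and c(M) = #{j | N^c_j > 0}.
   No p-label occurs in exactly one p-vertex u_r: its two edges lead to v_r and
   v_{r+1}, whose n-labels differ, so one of them would be counted once.  Hence
   every used label has N^c_j >= 2, and then N^c_j [N^c_j >= 3] + 6 <= 3 N^c_j.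
   Summing, the left-hand side is at most 3 sum_r d_r - 6 c(M), which is
   (6 Delta - 6) ell minus the nonnegative term 3 ell (L - 2 r(M)). *)

Lemma sum_heavy_add_support_leq (I : finType) (f : I -> nat) :
  (forall i, f i != 1) ->
  (\sum_(i | 3 <= f i) f i + 6 * #|[set i | 0 < f i]| <= 3 * \sum_i f i)%N.
Proof.
move=> f_neq1; rewrite -sum1dep_card big_mkcond [X in (_ + 6 * X)%N]big_mkcond /=.
rewrite !big_distrr -big_split /=; apply: leq_sum => i _.
by have := f_neq1 i; case: (leqP 3 (f i)); case: posnP => /=; lia.
Qed.

Section Counting.

Variables (p L : nat) (T : 'I_L -> seq 'I_p).

Lemma sum_size_eq_sum_Nc : (forall r, uniq (T r)) ->
  (\sum_r size (T r) = \sum_j Nc T j)%N.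
Proof.
move=> T_uniq.
have -> : (\sum_j Nc T j = \sum_j \sum_(r | j \in T r) 1)%N.
  by apply: eq_bigr => j _; rewrite sum1dep_card.
rewrite (exchange_big_dep predT) //=; apply: eq_bigr => r _.
by rewrite sum1dep_card cardsE (card_uniqP (T_uniq r)).
Qed.

Lemma cM_eq_card_Nc_gt0 : cM T = #|[set j | 0 < Nc T j]|.
Proof.
apply: eq_card => j; rewrite !inE card_gt0.
apply/existsP/set0Pn => -[r r_j]; exists r; by rewrite ?inE in r_j *.
Qed.

End Counting.

Lemma multi_labelling_Nc_neq1 (p n L1 ell L : nat)
    (a : 'I_L -> 'I_n) (T : 'I_L -> seq 'I_p) (j : 'I_p) :
  is_multi_labelling L1 ell a T -> Nc T j != 1%N.
Proof.
move=> [_ [a_step edges]]; apply/negP => /cards1P [r0 Nc_r0].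
have T_j r : (j \in T r) = (r == r0) by rewrite -in_set1 -Nc_r0 inE.
suff once : edge_count a T (a r0) j = 1%N by case: (edges (a r0) j); rewrite once.
rewrite /edge_count.
have -> : [set r | (a r == a r0) && (j \in T r)] = [set r0].
  by apply/setP => r; rewrite !inE T_j; case: (eqVneq r r0) => [->|]; rewrite ?eqxx ?andbF.
have -> : [set r | (a (ordS r) == a r0) && (j \in T r)] = set0.
  apply/setP => r; rewrite !inE T_j; case: (eqVneq r r0) => [->|]; rewrite ?andbF //.
  by rewrite eq_sym (negbTE (a_step r0)).
by rewrite cards1 cards0.
Qed.

Local Open Scope ring_scope.

Lemma DeltaM_scaled (p n ell L : nat) (a : 'I_L -> 'I_n) (T : 'I_L -> seq 'I_p) :
  (0 < ell)%N ->
  (6 * DeltaM ell a T - 6) * ell%:R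
    = 3 * (\sum_r size (T r))%:R - 6 * (cM T)%:R
      + (L%:R - 2 * (rM a)%:R) * (3 * ell%:R) :> rat.
Proof.
move=> ell_gt0; rewrite /DeltaM -mulr_suml -natr_sum.
by field; rewrite pnatr_eq0 -lt0n.
Qed.

Theorem lemmaC4 (p n L1 ell L : nat) (a : 'I_L -> 'I_n) (T : 'I_L -> seq 'I_p) :
  (0 < ell)%N -> (ell <= L1)%N -> (2 <= L)%N ->
  @is_multi_labelling p n L1 ell L a T ->
  (2 * rM a <= L)%N ->
  ((\sum_(j : 'I_p | (3 <= Nc T j)%N) Nc T j)%:R : rat)
    <= (6 * @DeltaM p n ell L a T - 6) * ell%:R.
Proof.
move=> ell_gt0 _ _ ML rM_le.
have T_uniq r : uniq (T r) by case: (ML.1 r).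
have heavy := sum_heavy_add_support_leq (fun j => multi_labelling_Nc_neq1 j ML).
rewrite -cM_eq_card_Nc_gt0 -sum_size_eq_sum_Nc // -(ler_nat rat) in heavy.
rewrite DeltaM_scaled //; move: heavy; rewrite natrD !natrM.
have : 0 <= (L%:R - 2 * (rM a)%:R) * (3 * ell%:R) :> rat.
  by rewrite mulr_ge0 // ?subr_ge0 -?natrM ?ler_nat.
lra.
Qed.
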